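(* Let $M\in\mathbb{N}$, $M\ge1$, and let $r$ be a strong solution of the BVP. Then $r(R)\ge0$ for all $R\in[0,1]$ and $\dot r(R)\ge0$ for all $R\in(0,1]$.
   Context: Fix constants $\gamma>0$, $s_0\ge0$, $\kappa\ge-\gamma s_0$ and a convex function $\rho\in C^\infty(\mathbb{R})$ with $\rho(s)=0$ for $s\le0$, $\rho(s)=\gamma s+\kappa$ for $s\ge s_0$, and $\rho=\rho_1$ on $[0,s_0]$ where $\rho_1$ is smooth and convex with $\rho_1(0)=0$, $\rho_1(s_0)=\gamma s_0+\kappa$. For $M\in\mathbb{N}\setminus\{0\}$ and a function $r$ on $(0,1]$ let $d(R)=\frac{Mr(R)\dot r(R)}{R}$ and $Lr(R)=\frac{M^2r}{R}-\dot r-R\ddot r$. A strong solution of the BVP is a function $r\in C([0,1])\cap C^\infty((0,1])$ with $Lr=M\rho''(d)\dot d\,r$ on $(0,1)$, $r(0)=0$ and $r(1)=1$. *)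

From Stdlib Require Import Reals.
From Coquelicot Require Import Coquelicot.
Open Scope R_scope.

Definition smooth_R (f : R -> R) : Prop :=
  forall (n : nat) (x : R), ex_derive_n f n x.

Definition convex_R (f : R -> R) : Prop :=
  forall x y t, 0 <= t <= 1 -> f (t * x + (1 - t) * y) <= t * f x + (1 - t) * f y.

Definition admissible_rho (gamma s0 kappa : R) (rho : R -> R) : Prop :=
  0 < gamma /\ 0 <= s0 /\ - gamma * s0 <= kappa /\
  smooth_R rho /\ convex_R rho /\
  (forall s, s <= 0 -> rho s = 0) /\
  (forall s, s0 <= s -> rho s = gamma * s + kappa) /\
  (exists rho1 : R -> R, smooth_R rho1 /\ convex_R rho1 /\
     rho1 0 = 0 /\ rho1 s0 = gamma * s0 + kappa /\
     (forall s, 0 <= s <= s0 -> rho s = rho1 s)).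

(* r in C^infty((0,1]): all derivatives exist on (0,1) and each extends
   continuously (finite one-sided limit) to R = 1. *)
Definition smooth_0_1 (r : R -> R) : Prop :=
  (forall (n : nat) (x : R), 0 < x < 1 -> ex_derive_n r n x) /\
  (forall n : nat, exists l : R, filterlim (Derive_n r n) (at_left 1) (locally l)).

Definition dfun (M : nat) (r : R -> R) : R -> R :=
  fun x => INR M * r x * Derive r x / x.

Definition Lop (M : nat) (r : R -> R) : R -> R :=
  fun x => INR M ^ 2 * r x / x - Derive r x - x * Derive_n r 2 x.

Definition strong_solution (rho : R -> R) (M : nat) (r : R -> R) : Prop :=
  (forall x, 0 <= x <= 1 ->
     filterlim r (within (fun y => 0 <= y <= 1) (locally x)) (locally (r x))) /\
  smooth_0_1 r /\
  (forall x, 0 < x < 1 ->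
     Lop M r x = INR M * Derive_n rho 2 (dfun M r x) * Derive (dfun M r) x * r x) /\
  r 0 = 0 /\ r 1 = 1.

From Stdlib Require Import Reals Lra.
From Coquelicot Require Import Coquelicot.
Open Scope R_scope.

(* Where [d <= 0] the equation is linear, [(R r')' = M^2 r / R], because
   [rho''] vanishes on [(-oo, 0]].  A negative interior minimum of [r] has
   [r' = 0], hence [d = 0] and [R r'' = M^2 r / R < 0], which is impossible;
   so [r >= 0].  Then wherever [r' < 0] we have [d <= 0] and [(R r')' >= 0],
   so a negative value [r'(x0)] propagates to all of [(0, x0]]: [r] would
   decrease from [r 0 = 0] to [r x0 >= 0].  The limit of [r'] at [1] is a
   limit of nonnegative values. *)

Lemma exists_pos_lt_min d e : 0 < d -> 0 < e -> exists h, 0 < h /\ h < d /\ h < e.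
Proof.
  intros Hd He; exists (Rmin d e / 2).
  pose proof (Rmin_l d e); pose proof (Rmin_r d e).
  assert (0 < Rmin d e) by (apply Rmin_glb_lt; lra).
  lra.
Qed.

Lemma locally_exists_right x z (P : R -> Prop) :
  x < z -> locally x P -> exists y, x < y < z /\ P y.
Proof.
  intros Hxz [e He].
  destruct (exists_pos_lt_min e (z - x)) as [h [Hh [Hhe Hhz]]]; [apply cond_pos | lra |].
  exists (x + h); split; [lra |].
  apply He; change (Rabs (x + h - x) < e); rewrite Rabs_right; lra.
Qed.

Lemma locally_exists_left x z (P : R -> Prop) :
  z < x -> locally x P -> exists y, z < y < x /\ P y.
Proof.
  intros Hzx [e He].
  destruct (exists_pos_lt_min e (x - z)) as [h [Hh [Hhe Hhz]]]; [apply cond_pos | lra |].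
  exists (x - h); split; [lra |].
  apply He; change (Rabs (x - h - x) < e); rewrite Rabs_left; lra.
Qed.

Lemma is_derive_sign_near (f : R -> R) x l : is_derive f x l -> l <> 0 ->
  exists d, 0 < d /\ forall h, 0 < Rabs h < d -> 0 < l * ((f (x + h) - f x) * h).
Proof.
  intros Hd Hl; apply is_derive_Reals in Hd.
  destruct (Hd (Rabs l) (Rabs_pos_lt _ Hl)) as [d Hq].
  exists d; split; [apply cond_pos |]; intros h [Hh0 Hhd].
  assert (Hh : h <> 0) by (intros ->; rewrite Rabs_R0 in Hh0; lra).
  specialize (Hq h Hh Hhd); set (q := (f (x + h) - f x) / h) in Hq.
  replace ((f (x + h) - f x) * h) with (q * (h * h)) by (unfold q; field; exact Hh).
  assert (Hlq : 0 < l * q).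
  { apply Rabs_def2 in Hq.
    destruct (Rlt_or_le 0 l); [rewrite Rabs_right in Hq | rewrite Rabs_left1 in Hq]; nra. }
  assert (0 < h * h) by (destruct (Rtotal_order h 0) as [|[|]]; [nra | contradiction | nra]).
  nra.
Qed.

Lemma Derive_eq_0_at_interior_min (f : R -> R) a b m :
  a < m < b -> ex_derive f m -> (forall t, a < t < b -> f m <= f t) -> Derive f m = 0.
Proof.
  intros Hm Hex Hmin.
  destruct (Req_dec (Derive f m) 0) as [| Hne]; [assumption | exfalso].
  destruct (is_derive_sign_near _ _ _ (Derive_correct _ _ Hex) Hne) as [d [Hd Hsign]].
  destruct (exists_pos_lt_min d (Rmin (m - a) (b - m))) as [k [Hk [Hkd Hkab]]];
    [lra | apply Rmin_glb_lt; lra |].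
  pose proof (Rmin_l (m - a) (b - m)); pose proof (Rmin_r (m - a) (b - m)).
  set (h := if Rlt_dec 0 (Derive f m) then - k else k).
  assert (Hsh : Derive f m * h < 0)
    by (unfold h; destruct (Rlt_dec 0 (Derive f m)); nra).
  assert (Habs : 0 < Rabs h < d)
    by (unfold h; destruct (Rlt_dec 0 (Derive f m));
        [rewrite Rabs_Ropp |]; rewrite Rabs_right; lra).
  assert (f m <= f (m + h))
    by (apply Hmin; unfold h; destruct (Rlt_dec 0 (Derive f m)); lra).
  specialize (Hsign h Habs); nra.
Qed.

Lemma Derive2_ge0_at_interior_min (f : R -> R) a b m :
  a < m < b -> (forall t, a < t < b -> ex_derive f t) ->
  (forall t, a < t < b -> ex_derive (Derive f) t) ->
  (forall t, a < t < b -> f m <= f t) -> 0 <= Derive_n f 2 m.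
Proof.
  intros Hm Hd1 Hd2 Hmin.
  destruct (Rle_or_lt 0 (Derive_n f 2 m)) as [| Hneg]; [assumption | exfalso].
  pose proof (Derive_eq_0_at_interior_min f a b m Hm (Hd1 m Hm) Hmin) as Hf'm.
  destruct (is_derive_sign_near (Derive f) m (Derive_n f 2 m)
              (Derive_correct _ _ (Hd2 m Hm)) ltac:(lra)) as [d [Hd Hsign]].
  rewrite Hf'm in Hsign.
  destruct (exists_pos_lt_min d (b - m)) as [h [Hh [Hhd Hhb]]]; [lra | lra |].
  assert (Hdecr : forall t, m < t <= m + h -> Derive f t < 0).
  { intros t Ht; specialize (Hsign (t - m)); rewrite Rabs_right in Hsign by lra.
    replace (m + (t - m)) with t in Hsign by ring.
    specialize (Hsign ltac:(lra)).
    destruct (Rlt_or_le (Derive f t) 0) as [| Hge]; [assumption | exfalso].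
    assert (0 <= Derive f t * (t - m)) by (apply Rmult_le_pos; lra).
    nra. }
  destruct (MVT_cor2 f (Derive f) m (m + h)) as [c [Hc Hcm]]; [lra | |].
  - intros t Ht; apply is_derive_Reals, Derive_correct, Hd1; lra.
  - assert (f m <= f (m + h)) by (apply Hmin; lra).
    specialize (Hdecr c ltac:(lra)); nra.
Qed.

Lemma le_left_endpoint_of_min (f : R -> R) a b :
  a < b -> (forall t, a <= t <= b -> ex_derive f t) ->
  (forall z, a < z <= b -> f z <= f b -> 0 < Derive f z) -> f a <= f b.
Proof.
  intros Hab Hd Hpos.
  assert (Hcont : forall t, a <= t <= b -> continuity_pt f t)
    by (intros t Ht; apply continuity_pt_filterlim, (ex_derive_continuous f t), Hd, Ht).
  destruct (continuity_ab_min f a b ltac:(lra) Hcont) as [z [Hmin Hz]].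
  assert (Hzb : f z <= f b) by (apply Hmin; lra).
  destruct (Req_dec z a) as [<- | Hza]; [exact Hzb | exfalso].
  assert (Hf'z : 0 < Derive f z) by (apply Hpos; lra).
  destruct (is_derive_sign_near _ _ _ (Derive_correct _ _ (Hd z Hz)) ltac:(lra))
    as [d [Hd0 Hsign]].
  destruct (exists_pos_lt_min d (z - a)) as [h [Hh [Hhd Hha]]]; [lra | lra |].
  specialize (Hsign (- h)); rewrite Rabs_Ropp, Rabs_right in Hsign by lra.
  assert (f z <= f (z + - h)) by (apply Hmin; lra).
  assert (0 <= (f (z + - h) - f z) * h) by (apply Rmult_le_pos; lra).
  specialize (Hsign ltac:(lra)); nra.
Qed.

Lemma Derive_lt_0_decreasing (f : R -> R) a b :
  a < b -> (forall t, a <= t <= b -> ex_derive f t) ->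
  (forall t, a <= t <= b -> Derive f t < 0) -> f b < f a.
Proof.
  intros Hab Hd Hneg.
  enough (- f a < - f b) by lra.
  apply (incr_function_le (fun t => - f t) a b (fun t => - Derive f t)); simpl; try lra.
  - intros t Ht1 Ht2; apply (is_derive_opp f), Derive_correct, Hd; lra.
  - intros t Ht1 Ht2; specialize (Hneg t (conj Ht1 Ht2)); lra.
Qed.

Lemma Derive_eq_0_of_vanishing_nonpos (g : R -> R) s :
  (forall u, u <= 0 -> g u = 0) -> s <= 0 -> ex_derive g s -> Derive g s = 0.
Proof.
  intros Hg Hs Hex.
  destruct (Req_dec (Derive g s) 0) as [| Hne]; [assumption | exfalso].
  destruct (is_derive_sign_near _ _ _ (Derive_correct _ _ Hex) Hne) as [d [Hd Hsign]].
  specialize (Hsign (- (d / 2))); rewrite Rabs_Ropp, Rabs_right in Hsign by lra.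
  rewrite !Hg in Hsign by lra.
  specialize (Hsign ltac:(lra)); lra.
Qed.

Lemma Derive_n_eq_0_of_vanishing_nonpos (f : R -> R) :
  smooth_R f -> (forall s, s <= 0 -> f s = 0) ->
  forall n s, s <= 0 -> Derive_n f n s = 0.
Proof.
  intros Hsm Hf n; induction n as [| n IHn]; intros s Hs; [exact (Hf s Hs) |].
  exact (Derive_eq_0_of_vanishing_nonpos (Derive_n f n) s IHn Hs (Hsm (S n) s)).
Qed.

Section StrongSolution.

Variables (rho : R -> R) (M : nat) (r : R -> R).
Hypothesis rho2_nonpos : forall s, s <= 0 -> Derive_n rho 2 s = 0.
Hypothesis M_ge1 : (1 <= M)%nat.
Hypothesis r_sol : strong_solution rho M r.

Lemma INR_M_sqr_gt0 : 0 < INR M ^ 2.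
Proof. pose proof (le_INR 1 M M_ge1); simpl in *; nra. Qed.

Lemma sol_ex_derive t : 0 < t < 1 -> ex_derive r t.
Proof. intros Ht; exact (proj1 (proj1 (proj2 r_sol)) 1%nat t Ht). Qed.

Lemma sol_ex_derive2 t : 0 < t < 1 -> ex_derive (Derive r) t.
Proof. intros Ht; exact (proj1 (proj1 (proj2 r_sol)) 2%nat t Ht). Qed.

Lemma sol_near_gt p v : 0 <= p <= 1 -> v < r p ->
  locally p (fun y => 0 <= y <= 1 -> v < r y).
Proof. intros Hp Hv; exact (proj1 r_sol p Hp _ (open_gt v (r p) Hv)). Qed.

Lemma sol_near_lt p v : 0 <= p <= 1 -> r p < v ->
  locally p (fun y => 0 <= y <= 1 -> r y < v).
Proof. intros Hp Hv; exact (proj1 r_sol p Hp _ (open_lt v (r p) Hv)). Qed.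

Lemma sol_eq_where_dfun_nonpos t : 0 < t < 1 -> dfun M r t <= 0 ->
  Derive r t + t * Derive_n r 2 t = INR M ^ 2 * r t / t.
Proof.
  intros Ht Hd.
  pose proof (proj1 (proj2 (proj2 r_sol)) t Ht) as Heq.
  unfold Lop in Heq; rewrite rho2_nonpos in Heq by exact Hd.
  rewrite Rmult_0_r, !Rmult_0_l in Heq; lra.
Qed.

Lemma sol_nonneg x : 0 <= x <= 1 -> 0 <= r x.
Proof.
  intros Hx; destruct (Rle_or_lt 0 (r x)) as [| Hneg]; [assumption | exfalso].
  destruct r_sol as (_ & _ & _ & Hr0 & Hr1).
  assert (Hx01 : 0 < x < 1)
    by (split; apply Rnot_le_lt; intros Hle;
        [replace x with 0 in Hneg by lra | replace x with 1 in Hneg by lra]; lra).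
  destruct (locally_exists_right 0 x _ (proj1 Hx01)
              (sol_near_gt 0 (r x) ltac:(lra) ltac:(lra))) as [a [Ha Hra]].
  destruct (locally_exists_left 1 x _ (proj2 Hx01)
              (sol_near_gt 1 (r x) ltac:(lra) ltac:(lra))) as [b [Hb Hrb]].
  specialize (Hra ltac:(lra)); specialize (Hrb ltac:(lra)).
  assert (Hcont : forall t, a <= t <= b -> continuity_pt r t)
    by (intros t Ht; apply continuity_pt_filterlim, (ex_derive_continuous r t),
        sol_ex_derive; lra).
  destruct (continuity_ab_min r a b ltac:(lra) Hcont) as [m [Hmin Hm]].
  assert (Hrm : r m <= r x) by (apply Hmin; lra).
  assert (Hmab : a < m < b)
    by (split; apply Rnot_le_lt; intros Hle;
        [replace m with a in Hrm by lra | replace m with b in Hrm by lra]; lra).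
  assert (Hmin' : forall t, a < t < b -> r m <= r t) by (intros t Ht; apply Hmin; lra).
  assert (Hd1 : forall t, a < t < b -> ex_derive r t) by (intros; apply sol_ex_derive; lra).
  assert (Hd2 : forall t, a < t < b -> ex_derive (Derive r) t)
    by (intros; apply sol_ex_derive2; lra).
  pose proof (Derive_eq_0_at_interior_min r a b m Hmab (Hd1 m Hmab) Hmin') as Hr'm.
  pose proof (Derive2_ge0_at_interior_min r a b m Hmab Hd1 Hd2 Hmin') as Hr''m.
  assert (Hdm : dfun M r m <= 0) by (unfold dfun; rewrite Hr'm; unfold Rdiv; lra).
  pose proof (sol_eq_where_dfun_nonpos m ltac:(lra) Hdm) as Heq.
  rewrite Hr'm in Heq.
  pose proof INR_M_sqr_gt0.
  assert (0 < / m) by (apply Rinv_0_lt_compat; lra).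
  assert (INR M ^ 2 * r m < 0) by nra.
  unfold Rdiv in Heq; nra.
Qed.

Lemma sol_dfun_nonpos t : 0 < t < 1 -> Derive r t <= 0 -> dfun M r t <= 0.
Proof.
  intros Ht Hr'; unfold dfun, Rdiv.
  pose proof (pos_INR M); pose proof (sol_nonneg t ltac:(lra)).
  assert (0 < / t) by (apply Rinv_0_lt_compat; lra).
  assert (0 <= INR M * r t) by (apply Rmult_le_pos; lra).
  assert (INR M * r t * Derive r t <= 0) by nra.
  nra.
Qed.

(* Perturbing [t r'] by [eps t] makes its derivative strictly positive on the
   part of [[y, x0]] where it stays below its value at [x0]. *)
Lemma sol_Derive_neg_propagates_left y x0 :
  0 < y < x0 -> x0 < 1 -> Derive r x0 < 0 -> Derive r y < 0.
Proof.
  intros Hy Hx0 Hr'x0.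
  set (eps := - Derive r x0 / 2).
  set (phi := fun t => t * Derive r t + eps * t).
  assert (Hphi : forall t, 0 < t < 1 ->
            is_derive phi t (Derive r t + t * Derive_n r 2 t + eps)).
  { intros t Ht; unfold phi; auto_derive; [exact (sol_ex_derive2 t Ht) |].
    change (Derive (fun x => Derive r x) t) with (Derive_n r 2 t); ring. }
  assert (Hphi_x0 : phi x0 = x0 * Derive r x0 / 2) by (unfold phi, eps; lra).
  assert (Hle : phi y <= phi x0).
  { apply le_left_endpoint_of_min; [lra | |].
    - intros t Ht; eexists; apply Hphi; lra.
    - intros z Hz Hphiz; rewrite (is_derive_unique _ _ _ (Hphi z ltac:(lra))).
      rewrite Hphi_x0 in Hphiz; unfold phi in Hphiz.
      assert (Hr'z : Derive r z < 0) by (unfold eps in Hphiz; nra).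
      rewrite (sol_eq_where_dfun_nonpos z ltac:(lra) (sol_dfun_nonpos z ltac:(lra) ltac:(lra))).
      pose proof INR_M_sqr_gt0; pose proof (sol_nonneg z ltac:(lra)).
      assert (0 < / z) by (apply Rinv_0_lt_compat; lra).
      assert (0 <= INR M ^ 2 * r z) by (apply Rmult_le_pos; lra).
      unfold Rdiv, eps; nra. }
  rewrite Hphi_x0 in Hle; unfold phi, eps in Hle; nra.
Qed.

Lemma sol_Derive_nonneg x0 : 0 < x0 < 1 -> 0 <= Derive r x0.
Proof.
  intros Hx0; destruct (Rle_or_lt 0 (Derive r x0)) as [| Hneg]; [assumption | exfalso].
  assert (Hdecr : forall a b, 0 < a < b -> b <= x0 -> r b < r a).
  { intros a b Hab Hb; apply Derive_lt_0_decreasing; [lra | |].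
    - intros t Ht; apply sol_ex_derive; lra.
    - intros t Ht; destruct (Req_dec t x0) as [-> | Ht0]; [exact Hneg |].
      apply (sol_Derive_neg_propagates_left t x0); lra. }
  pose proof (Hdecr (x0 / 2) x0 ltac:(lra) ltac:(lra)) as Hmid.
  pose proof (sol_nonneg x0 ltac:(lra)).
  destruct r_sol as (_ & _ & _ & Hr0 & _).
  destruct (locally_exists_right 0 (x0 / 2) _ ltac:(lra)
              (sol_near_lt 0 (r (x0 / 2)) ltac:(lra) ltac:(rewrite Hr0; lra))) as [t [Ht Hrt]].
  specialize (Hrt ltac:(lra)).
  pose proof (Hdecr t (x0 / 2) ltac:(lra) ltac:(lra)); lra.
Qed.

Lemma sol_Derive_limit_nonneg l :
  filterlim (Derive r) (at_left 1) (locally l) -> 0 <= l.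
Proof.
  intros Hl.
  apply (filterlim_le (F := at_left 1) (fun _ => 0) (Derive r) 0 l);
    [| apply filterlim_const | exact Hl].
  exists (mkposreal 1 Rlt_0_1); intros y Hy Hy1; apply sol_Derive_nonneg.
  change (Rabs (y - 1) < 1) in Hy; apply Rabs_def2 in Hy; lra.
Qed.

End StrongSolution.

Theorem lemma2p3 (gamma s0 kappa : R) (rho : R -> R) (M : nat) (r : R -> R) :
  admissible_rho gamma s0 kappa rho ->
  (1 <= M)%nat ->
  strong_solution rho M r ->
  (forall x, 0 <= x <= 1 -> 0 <= r x) /\
  (forall x, 0 < x < 1 -> 0 <= Derive r x) /\
  (forall l, filterlim (Derive r) (at_left 1) (locally l) -> 0 <= l).
Proof.
  intros (_ & _ & _ & Hsmooth & _ & Hvanish & _) HM Hsol.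
  pose proof (Derive_n_eq_0_of_vanishing_nonpos rho Hsmooth Hvanish 2) as Hrho2.
  split; [| split].
  - exact (sol_nonneg rho M r Hrho2 HM Hsol).
  - exact (sol_Derive_nonneg rho M r Hrho2 HM Hsol).
  - exact (sol_Derive_limit_nonneg rho M r Hrho2 HM Hsol).
Qed.
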